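(* Let $a,b,q$ be complex numbers with $q\ne0$, and define $B_{n,k}(a,b)$ ($n\ge k\ge0$) by $$z^k=\sum_{n=k}^\infty B_{n,k}(a,b)\,z^n\frac{(az;q)_n}{(bz;q)_n}\qquad(k\ge0)$$ in $\mathbb{C}[[z]]$. Then for every integer $n\ge1$ (and $0\le k\le n$) and every $t\in\mathbb{C}$, $$B_{n,k}(at,bt)=B_{n,k}(a,b)\,t^{n-k},$$ and $$[z^{n}]\Big\{\frac{(bz;q)_{n-1}}{(az;q)_n}\Big\}=a\sum_{i=0}^{n-1}B_{n-i,1}(a,b)\,q^{(n-i)i}\,[z^{i}]\Big\{\frac{(bz;q)_i}{(az;q)_{i+1}}\Big\}.$$
   Context: $(x;q)_n=\prod_{j=0}^{n-1}(1-xq^j)$ for $n\ge0$, $(x;q)_0=1$; quotients are regarded as formal power series in $z$ and $[z^m]\{f\}$ denotes the coefficient of $z^m$. The family $\{z^n(az;q)_n/(bz;q)_n\}_{n\ge0}$ is a basis of $\mathbb{C}[[z]]$ in the formal sense, so the $B_{n,k}(a,b)$ are uniquely determined. *)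

From HB Require Import structures.
From mathcomp Require Import all_boot all_order all_algebra.
From mathcomp Require Export complex.
From mathcomp Require Export reals.
Set Implicit Arguments. Unset Strict Implicit. Unset Printing Implicit Defensive.
Import Order.TTheory GRing.Theory Num.Theory.
Local Open Scope ring_scope.

Definition qpoch {F : comRingType} (q x : F) (n : nat) : {poly F} :=
  \prod_(j < n) (1 - (x * q ^+ j) *: 'X).

(* [z^m] { P / Q } for polynomials P, Q with Q(0) = 1, as formal power series:
   1/Q = sum_{j>=0} (1 - Q)^j, and since (1-Q) has zero constant term only
   j <= m contribute to the coefficient of z^m. *)
Definition coef_div {F : comRingType} (P Q : {poly F}) (m : nat) : F :=
  (P * \sum_(j < m.+1) (1 - Q) ^+ j)`_m.

From HB Require Import structures.
From mathcomp Require Import all_boot all_order all_algebra.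
From mathcomp Require Import complex reals.
From mathcomp Require Import ring zify.
Import Order.TTheory GRing.Theory Num.Theory.
Local Open Scope ring_scope.

(* [coef_div P Q m] is determined by any U with Q * U = P up to degree m,
   which lets one cancel common factors, multiply series and dilate z -> c z.
   Homogeneity of B then follows by induction from its triangular recursion,
   since dilating by t scales the j-th basis series by t^(m-j) at z^m.
   For the second identity, multiply the expansion of z by
   (bz;q)_n / (az;q)_(n+1): after cancelling the common q-Pochhammer factors
   the j-th term becomes q^(j(n-j)) [z^(n-j)] (bz;q)_(n-j) / (az;q)_(n-j+1),
   and the left-hand side is then matched through the shift
   [z^(n+1)] (bz;q)_n / (az;q)_(n+1) = a [z^n] (bz;q)_(n+1) / (az;q)_(n+2). *)

Section TruncatedSeries.
Context {F : comNzRingType}.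
Implicit Types (C P Q R S U : {poly F}) (c : F).

Definition eq_upto N P Q := forall m, (m <= N)%N -> P`_m = Q`_m.

Lemma eq_uptoW {M N P Q} : (M <= N)%N -> eq_upto N P Q -> eq_upto M P Q.
Proof. by move=> leMN eqPQ m leMm; apply: eqPQ; apply: leq_trans leMN. Qed.

Lemma eq_uptoM {N P P' Q Q'} :
  eq_upto N P P' -> eq_upto N Q Q' -> eq_upto N (P * Q) (P' * Q').
Proof.
move=> eqPP' eqQQ' m lemN; rewrite !coefM; apply: eq_bigr => i _.
rewrite eqPP' ?eqQQ' //; first exact: leq_trans (leq_subr _ _) lemN.
by apply: leq_trans lemN; rewrite -ltnS.
Qed.

Definition inv_upto N Q := \sum_(j < N.+1) (1 - Q) ^+ j.

Lemma coef_exp1B_lt Q j m : Q`_0 = 1 -> (m < j)%N -> ((1 - Q) ^+ j)`_m = 0.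
Proof.
move=> Q0 ltmj; have : root (1 - Q) 0.
  by rewrite /root horner_coef0 coefB coef1 Q0 subrr.
by case/factor_theorem=> U ->; rewrite subr0 exprMn coefMXn ltmj.
Qed.

Lemma mul_inv_upto N Q : Q`_0 = 1 -> eq_upto N (Q * inv_upto N Q) 1.
Proof.
move=> Q0 m lemN; have -> : Q * inv_upto N Q = 1 - (1 - Q) ^+ N.+1.
  have {1}-> : Q = - ((1 - Q) - 1) by rewrite opprB subKr.
  by rewrite mulNr -subrX1 opprB.
by rewrite coefB coef_exp1B_lt ?subr0.
Qed.

Lemma coef_divP {N P Q U m} : Q`_0 = 1 -> eq_upto N (Q * U) P -> (m <= N)%N ->
  coef_div P Q m = U`_m.
Proof.
move=> Q0 eqQUP lemN.
have eqPm := eq_uptoM (eq_uptoW lemN eqQUP) (fun k _ => erefl (inv_upto m Q)`_k).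
have eqUm := eq_uptoM (fun k _ => erefl U`_k) (mul_inv_upto m Q Q0).
by rewrite /coef_div -eqPm // [Q * U]mulrC -mulrA eqUm // mulr1.
Qed.

Lemma coef_div_inv_upto N P Q m : Q`_0 = 1 -> (m <= N)%N ->
  coef_div P Q m = (P * inv_upto N Q)`_m.
Proof.
move=> Q0 lemN; apply: (coef_divP Q0 _ lemN).
rewrite mulrCA -[X in eq_upto _ _ X]mulr1.
exact: eq_uptoM (fun _ _ => erefl) (mul_inv_upto N Q Q0).
Qed.

Lemma coef_div0 P Q : coef_div P Q 0 = P`_0.
Proof. by rewrite /coef_div big_ord1 expr0 mulr1. Qed.

Lemma coef_divp1 P m : coef_div P 1 m = P`_m.
Proof.
apply: (coef_divP (coef1 F 0) _ (leqnn m)).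
by rewrite mul1r; apply: (fun _ _ => erefl).
Qed.

Lemma coef_div_XnM_lt k P Q m : (m < k)%N -> coef_div ('X^k * P) Q m = 0.
Proof. by move=> ltmk; rewrite /coef_div -mulrA coefXnM ltmk. Qed.

Lemma coef_div_XnM k P Q m : Q`_0 = 1 -> (k <= m)%N ->
  coef_div ('X^k * P) Q m = coef_div P Q (m - k).
Proof.
move=> Q0 lekm; rewrite [LHS]/coef_div -mulrA coefXnM ltnNge lekm /=.
by rewrite (coef_div_inv_upto m) ?leq_subr.
Qed.

Lemma coef0_1subZX c : (1 - c *: 'X)`_0 = 1.
Proof. by rewrite coefB coef1 coefZ coefX mulr0 subr0. Qed.

Lemma coef_div_1subZXM c P Q m : Q`_0 = 1 ->
  coef_div ((1 - c *: 'X) * P) Q m.+1 = coef_div P Q m.+1 - c * coef_div P Q m.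
Proof.
move=> Q0; rewrite [LHS]/coef_div -mulrA mulrBl mul1r coefB -scalerAl coefZ.
by rewrite coefXM /= !(coef_div_inv_upto m.+1).
Qed.

Lemma coef_div_mull C P Q m : C`_0 = 1 -> Q`_0 = 1 ->
  coef_div (C * P) (C * Q) m = coef_div P Q m.
Proof.
move=> C0 Q0; rewrite [RHS](coef_div_inv_upto m) //.
have CQ0 : (C * Q)`_0 = 1 by rewrite coef0M C0 Q0 mulr1.
apply: (coef_divP CQ0 _ (leqnn m)).
rewrite mulrACA -[X in eq_upto _ _ X]mulr1.
exact: eq_uptoM (fun _ _ => erefl) (mul_inv_upto m Q Q0).
Qed.

Lemma coef_divM P Q R S n : Q`_0 = 1 -> S`_0 = 1 ->
  coef_div (P * R) (Q * S) n =
  \sum_(m < n.+1) coef_div P Q m * coef_div R S (n - m).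
Proof.
move=> Q0 S0; have QS0 : (Q * S)`_0 = 1 by rewrite coef0M Q0 S0 mulr1.
pose U := (P * inv_upto n Q) * (R * inv_upto n S).
rewrite (@coef_divP n _ _ U _ QS0 _ (leqnn n)).
  rewrite coefM; apply: eq_bigr => m _.
  by rewrite -!(coef_div_inv_upto n) // ?leq_subr // -ltnS.
have -> : Q * S * U = P * R * ((Q * inv_upto n Q) * (S * inv_upto n S)).
  by rewrite /U; ring.
rewrite -[X in eq_upto _ _ X]mulr1 -[X in eq_upto _ _ (_ * X)]mulr1.
exact: eq_uptoM (fun _ _ => erefl)
  (eq_uptoM (mul_inv_upto n Q Q0) (mul_inv_upto n S S0)).
Qed.
End TruncatedSeries.

Section Dilation.
Context {F : comNzRingType}.
Implicit Types (P Q : {poly F}) (c : F).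

Definition dilate c P := P \Po (c *: 'X).

Lemma coef_dilate c P i : (dilate c P)`_i = c ^+ i * P`_i.
Proof.
rewrite /dilate comp_polyE; under eq_bigr do rewrite exprZn scalerA.
rewrite coef_sumMXn (big_ord1_cond_eq _ (fun j => P`_j * c ^+ j) xpredT).
rewrite andbT mulrC; case: ltnP => // sizePi.
by rewrite nth_default ?mulr0.
Qed.

Lemma coef_div_dilate c P Q m :
  coef_div (dilate c P) (dilate c Q) m = c ^+ m * coef_div P Q m.
Proof.
rewrite /coef_div -coef_dilate /dilate comp_polyM rmorph_sum.
by under [in RHS]eq_bigr do rewrite rmorphXn rmorphB rmorph1.
Qed.
End Dilation.

Section QPochhammer.
Context {F : comNzRingType}.
Implicit Types (q x : F).

Lemma qpoch_coef0 q x n : (qpoch q x n)`_0 = 1.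
Proof.
rewrite -horner_coef0 /qpoch horner_prod big1 // => j _.
by rewrite !hornerE subr0.
Qed.

Lemma dilate_qpoch q x c n : dilate c (qpoch q x n) = qpoch q (x * c) n.
Proof.
rewrite /dilate /qpoch rmorph_prod; apply: eq_bigr => j _.
by rewrite rmorphB rmorph1 /= linearZ /= comp_polyX scalerA mulrAC.
Qed.

Lemma qpochS q x n : qpoch q x n.+1 = (1 - x *: 'X) * dilate q (qpoch q x n).
Proof.
rewrite dilate_qpoch /qpoch big_ord_recl expr0 mulr1; congr (_ * _).
by apply: eq_bigr => j _; rewrite exprS mulrA.
Qed.

Lemma qpochSr q x n : qpoch q x n.+1 = qpoch q x n * (1 - (x * q ^+ n) *: 'X).
Proof. by rewrite /qpoch big_ord_recr. Qed.

Lemma qpochD q x n k : qpoch q x (n + k) = qpoch q x n * qpoch q (x * q ^+ n) k.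
Proof.
rewrite /qpoch big_split_ord /=; congr (_ * _).
by apply: eq_bigr => j _; rewrite exprD mulrA.
Qed.

Lemma coef_div_qpoch_scale q a b t j m : (j <= m)%N ->
  coef_div ('X^j * qpoch q (a * t) j) (qpoch q (b * t) j) m =
  t ^+ (m - j) * coef_div ('X^j * qpoch q a j) (qpoch q b j) m.
Proof.
move=> lejm; rewrite !coef_div_XnM ?qpoch_coef0 //.
by rewrite -!dilate_qpoch coef_div_dilate.
Qed.
End QPochhammer.

Lemma map_qpoch (F K : comNzRingType) (f : {rmorphism F -> K}) (q x : F) n :
  map_poly f (qpoch q x n) = qpoch (f q) (f x) n.
Proof.
rewrite /qpoch rmorph_prod; apply: eq_bigr => j _.
by rewrite rmorphB rmorph1 /= map_polyZ map_polyX rmorphM rmorphXn.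
Qed.

Lemma coef_div_map (F K : comNzRingType) (f : {rmorphism F -> K})
    (P Q : {poly F}) m :
  f (coef_div P Q m) = coef_div (map_poly f P) (map_poly f Q) m.
Proof.
rewrite /coef_div -coef_map rmorphM rmorph_sum.
by under [in LHS]eq_bigr do rewrite rmorphXn rmorphB rmorph1.
Qed.

Lemma coef_div_qpochS_regular {F : idomainType} {q : F} a b {n} : q ^+ n.+1 != 1 ->
  coef_div (qpoch q b n) (qpoch q a n.+1) n.+1 =
  a * coef_div (qpoch q b n.+1) (qpoch q a n.+2) n.
Proof.
move=> qn1_neq1.
set G := coef_div (qpoch q b n) (qpoch q a n.+1).
set H := coef_div (qpoch q b n.+1) (qpoch q a n.+2).
have dilate_coef0 x k : (dilate q (qpoch q x k))`_0 = 1.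
  by rewrite coef_dilate qpoch_coef0 expr0 mulr1.
(* With G = (bz;q)_n/(az;q)_(n+1) and H = (bz;q)_(n+1)/(az;q)_(n+2):
   (1 - az) H(z) = (1 - bz) G(qz) and (1 - bq^n z) G = (1 - aq^(n+1) z) H;
   the z^(n+1) coefficients differ by (1 - q^(n+1)) times the claim. *)
have rel1 : q ^+ n.+1 * G n.+1 - b * (q ^+ n * G n) = H n.+1 - a * H n.
  rewrite -!coef_div_dilate -coef_div_1subZXM // -qpochS.
  rewrite -(coef_div_mull (1 - a *: 'X)) ?coef0_1subZX // -qpochS.
  by rewrite coef_div_1subZXM ?qpoch_coef0.
have rel2 : G n.+1 - b * q ^+ n * G n = H n.+1 - a * q ^+ n.+1 * H n.
  rewrite -coef_div_1subZXM ?qpoch_coef0 //.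
  rewrite -(coef_div_mull (1 - (a * q ^+ n.+1) *: 'X)) ?coef0_1subZX ?qpoch_coef0 //.
  rewrite [X in coef_div _ X]mulrC -qpochSr [_ * qpoch q b n]mulrC -qpochSr.
  by rewrite coef_div_1subZXM ?qpoch_coef0.
apply: (mulfI (x := q ^+ n.+1 - 1)); first by rewrite subr_eq0.
have -> : (q ^+ n.+1 - 1) * G n.+1 =
    (q ^+ n.+1 * G n.+1 - b * (q ^+ n * G n)) - (G n.+1 - b * q ^+ n * G n) by ring.
by rewrite rel1 rel2; ring.
Qed.

(* The identity is polynomial in q: prove it over F[q], where q^(n+1) != 1,
   and evaluate. *)
Lemma coef_div_qpochS (F : idomainType) (q a b : F) n :
  coef_div (qpoch q b n) (qpoch q a n.+1) n.+1 =
  a * coef_div (qpoch q b n.+1) (qpoch q a n.+2) n.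
Proof.
have Xn1_neq1 : ('X : {poly F}) ^+ n.+1 != 1.
  by apply/eqP => /(congr1 (size : {poly F} -> nat)); rewrite size_polyXn size_poly1.
have := congr1 (horner_eval q) (coef_div_qpochS_regular a%:P b%:P Xn1_neq1).
by rewrite rmorphM /= !coef_div_map !map_qpoch /= !horner_evalE hornerX !hornerC.
Qed.

Section Expansion.
Context {F : comNzRingType} {q a b : F}.

Lemma coef_div_qpoch_split j n : (j <= n)%N ->
  coef_div ('X^j * qpoch q a j * qpoch q b n) (qpoch q b j * qpoch q a n.+1) n =
  q ^+ (j * (n - j)) * coef_div (qpoch q b (n - j)) (qpoch q a (n - j).+1) (n - j).
Proof.
move=> lejn; rewrite -mulrA coef_div_XnM ?coef0M ?qpoch_coef0 ?mulr1 //.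
move: (n - j)%N (subnKC lejn) => i <-.
rewrite -addnS !qpochD [X in coef_div _ X]mulrCA !mulrA.
rewrite coef_div_mull ?coef0M ?qpoch_coef0 ?mulr1 //.
by rewrite -!dilate_qpoch coef_div_dilate exprM.
Qed.

Context {B : nat -> F}.
Hypothesis expandX : forall m, ('X^1 : {poly F})`_m =
  \sum_(1 <= j < m.+1) B j * coef_div ('X^j * qpoch q a j) (qpoch q b j) m.

Lemma expandX_upto n m : (m <= n)%N -> ('X^1 : {poly F})`_m =
  \sum_(1 <= j < n.+1) B j * coef_div ('X^j * qpoch q a j) (qpoch q b j) m.
Proof.
move=> lemn; rewrite expandX [RHS](big_cat_nat _ (n := m.+1)) //=.
rewrite [X in _ + X]big_nat_cond [X in _ + X]big1 ?addr0 //.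
by move=> j /andP[/andP[ltmj _] _]; rewrite coef_div_XnM_lt ?mulr0.
Qed.

Lemma sum_coef_div_qpoch n : (0 < n)%N ->
  \sum_(i < n) B (n - i) * q ^+ ((n - i) * i)
     * coef_div (qpoch q b i) (qpoch q a i.+1) i =
  coef_div (qpoch q b n) (qpoch q a n.+1) n.-1.
Proof.
move=> n_gt0; symmetry.
rewrite -subn1 -coef_div_XnM ?qpoch_coef0 // -[qpoch q a n.+1]mul1r.
rewrite coef_divM ?coef1 ?qpoch_coef0 //.
pose g := coef_div (qpoch q b n) (qpoch q a n.+1).
pose c j := coef_div ('X^j * qpoch q a j) (qpoch q b j).
rewrite (eq_bigr (fun m : 'I_n.+1 =>
  \sum_(1 <= j < n.+1) B j * (c j m * g (n - m)%N))); last first.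
  move=> m _; rewrite coef_divp1 (expandX_upto n m (ltn_ord m)) mulr_suml.
  by apply: eq_bigr => j _; rewrite mulrA.
have split_term j : (1 <= j < n.+1)%N ->
    \sum_(m < n.+1) B j * (c j m * g (n - m)%N) =
    B j * (q ^+ (j * (n - j)) *
           coef_div (qpoch q b (n - j)) (qpoch q a (n - j).+1) (n - j)).
  move=> /andP[_ lejn]; rewrite -mulr_sumr -coef_divM ?qpoch_coef0 //.
  by rewrite coef_div_qpoch_split.
rewrite exchange_big /= (eq_big_nat _ _ split_term).
rewrite big_add1 big_mkord (reindex_inj rev_ord_inj) /=.
apply: eq_bigr => i _; rewrite subnSK // subKn ?mulrA //.
exact: ltnW.
Qed.
End Expansion.

Section Inversion.
Context {F : comNzRingType} {q : F} {B : F -> F -> nat -> nat -> F}.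
Hypothesis expandXn : forall (a b : F) (k m : nat),
  ('X^k : {poly F})`_m =
  \sum_(k <= n < m.+1) B a b n k * coef_div ('X^n * qpoch q a n) (qpoch q b n) m.

Lemma B_rec a b k n : (k <= n)%N ->
  B a b n k = ('X^k : {poly F})`_n -
    \sum_(k <= j < n) B a b j k * coef_div ('X^j * qpoch q a j) (qpoch q b j) n.
Proof.
move=> lekn; rewrite (expandXn a b) big_nat_recr //= coef_div_XnM ?qpoch_coef0 //.
by rewrite subnn coef_div0 qpoch_coef0 mulr1 addrC addrK.
Qed.

Lemma B_homogeneous a b t k n : (k <= n)%N ->
  B (a * t) (b * t) n k = B a b n k * t ^+ (n - k).
Proof.
elim/ltn_ind: n => n IH lekn; rewrite !B_rec // mulrBl; congr (_ - _).
  by rewrite coefXn; case: eqP => [->|_]; rewrite ?subnn ?expr0 ?mulr1 ?mul0r.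
rewrite mulr_suml; apply: eq_big_nat => j /andP[lekj ltjn].
rewrite IH // coef_div_qpoch_scale ?(ltnW ltjn) //.
have -> : (n - k = (j - k) + (n - j))%N by lia.
by rewrite exprD; ring.
Qed.
End Inversion.

Theorem mainTheorem6 (R : realType) (q : R[i]) (hq : q != 0)
  (B : R[i] -> R[i] -> nat -> nat -> R[i])
  (hB : forall (a b : R[i]) (k m : nat),
      ('X^k : {poly R[i]})`_m =
      \sum_(k <= n < m.+1)
         B a b n k * coef_div ('X^n * qpoch q a n) (qpoch q b n) m) :
  forall (a b t : R[i]) (n k : nat), (1 <= n)%N -> (k <= n)%N ->
    B (a * t) (b * t) n k = B a b n k * t ^+ (n - k)
    /\ coef_div (qpoch q b n.-1) (qpoch q a n) n =
       a * \sum_(i < n) B a b (n - i)%N 1%N * q ^+ ((n - i) * i)%N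
             * coef_div (qpoch q b i) (qpoch q a i.+1) i.
Proof.
move=> a b t n k n_gt0 lekn; split; first exact: B_homogeneous.
rewrite (sum_coef_div_qpoch (hB a b 1)) //.
by case: n n_gt0 {lekn} => // n _; rewrite coef_div_qpochS.
Qed.
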